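(* For every integer $n \ge 8$, $$M(n) \ge \tfrac12\, c^n, \qquad\text{where } c = 2132^{1/10} = 2.152\ldots$$
   Context: For a positive integer $n$, $M(n)$ denotes the number of permutations $(t_1,\dots,t_n)$ of $\{1,2,\ldots,n\}$ that do not contain a 3-term arithmetic progression as a subsequence. Here a sequence contains a 3-term arithmetic progression (3AP) as a subsequence if there are indices $i<j<k$ with $t_j - t_i = t_k - t_j \neq 0$; the common difference may be positive or negative. For example, $M(4)=10$. *)

From mathcomp Require Import all_boot.
Set Implicit Arguments. Unset Strict Implicit. Unset Printing Implicit Defensive.

(* s contains a 3-term arithmetic progression as a subsequence:
   indices i < j < k < size s with t_j - t_i = t_k - t_j <> 0.
   Over nat, t_j - t_i = t_k - t_j (as integers) iff 2 t_j = t_i + t_k. *)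
Definition has3AP (s : seq nat) : bool :=
  has (fun k => has (fun j => has (fun i =>
     [&& (i < j)%N, (j < k)%N, nth 0 s i != nth 0 s j &
         (nth 0 s j).*2 == nth 0 s i + nth 0 s k])
     (iota 0 (size s))) (iota 0 (size s))) (iota 0 (size s)).

(* M(n): number of permutations of {1,...,n} with no 3AP subsequence.
   [permutations] is a duplicate-free list of all permutations. *)
Definition M (n : nat) : nat :=
  size [seq s <- permutations (iota 1 n) | ~~ has3AP s].

(* If p and q are progression-free arrangements of {1..a} and {1..b}, then
   writing p on the odd numbers (x |-> 2x - 1) and q on the even numbers
   (x |-> 2x) and concatenating, in either order, gives a progression-free
   arrangement of {1..a+b} when b <= a <= b + 1: a progression cannot have its
   two ends in different blocks, since those have different parities, and the
   two maps preserve progressions.  Hence M(a + b) >= 2 M(a) M(b).  Writing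
   u(n) = 2 M(n), this reads u(a + b) >= u(a) u(b), so c^n <= u(n) propagates
   from the range 8 <= n <= 15, where it is checked on computed values of M, to
   all n >= 8 by halving. *)

From Stdlib Require Import Reals Lra.
From mathcomp Require Import all_boot zify.
Set Implicit Arguments. Unset Strict Implicit. Unset Printing Implicit Defensive.

Lemma has3APP s :
  reflect (exists i j k, [/\ i < j, j < k, k < size s, nth 0 s i != nth 0 s j &
                            (nth 0 s j).*2 == nth 0 s i + nth 0 s k])
          (has3AP s).
Proof.
apply: (iffP idP) => [|[i [j [k [ij jk ks ne e]]]]].
  case/hasP => k; rewrite mem_iota => /andP[_ ks].
  case/hasP => j _; case/hasP => i _ /and4P[ij jk ne e].
  by exists i, j, k.
have js := ltn_trans jk ks; have is_ := ltn_trans ij js.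
apply/hasP; exists k; first by rewrite mem_iota.
apply/hasP; exists j; first by rewrite mem_iota.
by apply/hasP; exists i; rewrite ?mem_iota ?ij ?jk ?ne.
Qed.

Lemma has3AP_map (f : nat -> nat) s :
  {in s &, injective f} ->
  {in s & &, forall x y z, ((f y).*2 == f x + f z) = (y.*2 == x + z)} ->
  has3AP (map f s) = has3AP s.
Proof.
move=> finj fmid; apply/has3APP/has3APP => -[i [j [k [ij jk ks ne e]]]];
  exists i, j, k; rewrite size_map in ks *;
  have js := ltn_trans jk ks; have is_ := ltn_trans ij js;
  rewrite ?(nth_map 0) // in ne e *; split => //.
- by apply: contra ne => /eqP ->.
- by rewrite -fmid // mem_nth.
- by rewrite (inj_in_eq finj) // mem_nth.
- by rewrite fmid // mem_nth.
Qed.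

Lemma has3AP_cat u v :
  (forall x y, x \in u -> y \in v -> odd x != odd y) ->
  ~~ has3AP u -> ~~ has3AP v -> ~~ has3AP (u ++ v).
Proof.
move=> uv_parity /has3APP u_free /has3APP v_free.
apply/has3APP => -[i [j [k [ij jk]]]]; rewrite size_cat !nth_cat => ks ne e.
have [ku | uk] := ltnP k (size u).
  have ju := ltn_trans jk ku; have iu := ltn_trans ij ju.
  rewrite ju iu ku in ne e; apply: u_free; exists i, j, k; split => //.
have kv : k - size u < size v by rewrite ltn_subLR.
have uk' : (k < size u) = false by rewrite ltnNge uk.
rewrite uk' in e.
have [iu | ui] := ltnP i (size u).
  rewrite iu in e; have := congr1 odd (eqP e); rewrite odd_double oddD.
  move: (uv_parity _ _ (mem_nth 0 iu) (mem_nth 0 kv)).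
  by case: (odd _); case: (odd _).
have uj := leq_trans ui (ltnW ij).
rewrite !ltnNge ui uj /= in ne e; apply: v_free.
exists (i - size u), (j - size u), (k - size u).
by rewrite !ltn_sub2rE.
Qed.

Definition to_odd (x : nat) := x.*2.-1.
Definition to_even (x : nat) := x.*2.

Lemma to_oddK : cancel to_odd uphalf.
Proof. by move=> x; rewrite /to_odd; lia. Qed.

Lemma to_odd_inj : injective to_odd.
Proof. exact: can_inj to_oddK. Qed.

Lemma to_even_inj : injective to_even.
Proof. exact: double_inj. Qed.

Lemma odd_to_odd x : 0 < x -> odd (to_odd x).
Proof. by case: x => // x _; rewrite /to_odd doubleS /= odd_double. Qed.

Lemma odd_to_even x : odd (to_even x) = false.
Proof. exact: odd_double. Qed.

Lemma has3AP_to_odd s : all (leq 1) s -> has3AP (map to_odd s) = has3AP s.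
Proof.
move=> /allP s_pos; apply: has3AP_map => [x y _ _ | x y z xs _ zs].
  exact: to_odd_inj.
by move: (s_pos x xs) (s_pos z zs); rewrite /to_odd => ? ?; apply/eqP/eqP; lia.
Qed.

Lemma has3AP_to_even s : has3AP (map to_even s) = has3AP s.
Proof.
apply: has3AP_map => [x y _ _ | x y z _ _ _]; first exact: to_even_inj.
by rewrite /to_even; apply/eqP/eqP; lia.
Qed.

Lemma cat_map_inj (T U : eqType) (f g : T -> U) p1 p2 q1 q2 :
  injective f -> injective g -> size p1 = size p2 ->
  map f p1 ++ map g q1 = map f p2 ++ map g q2 -> p1 = p2 /\ q1 = q2.
Proof.
move=> f_inj g_inj p12 /eqP; rewrite eqseq_cat ?size_map //.
by case/andP => /eqP/(inj_map f_inj) -> /eqP/(inj_map g_inj) ->.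
Qed.

Lemma perm_iota_odd_even a b : b <= a <= b.+1 ->
  perm_eq (map to_odd (iota 1 a) ++ map to_even (iota 1 b)) (iota 1 (a + b)).
Proof.
move=> ba; set s := _ ++ _.
have s_uniq : uniq s.
  rewrite cat_uniq !(map_inj_uniq to_odd_inj, map_inj_uniq to_even_inj) !iota_uniq.
  rewrite andbT /=; apply/hasPn => _ /mapP[y _ ->]; apply/mapP => -[x].
  by rewrite mem_iota /to_odd /to_even; lia.
have s_sub : {subset s <= iota 1 (a + b)}.
  move=> y; rewrite mem_cat => /orP[] /mapP[x]; rewrite !mem_iota => ? ->;
  rewrite /to_odd /to_even; lia.
have s_size : size (iota 1 (a + b)) <= size s.
  by rewrite size_cat !size_map !size_iota.
apply: (uniq_perm s_uniq (iota_uniq _ _)).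
by case: (uniq_min_size s_uniq s_sub s_size).
Qed.

Definition apfree n := [seq s <- permutations (iota 1 n) | ~~ has3AP s].

Lemma mem_apfree n s : (s \in apfree n) = ~~ has3AP s && perm_eq s (iota 1 n).
Proof. by rewrite mem_filter mem_permutations. Qed.

Lemma apfree_uniq n : uniq (apfree n).
Proof. exact/filter_uniq/permutations_uniq. Qed.

Lemma apfree_size n s : s \in apfree n -> size s = n.
Proof. by rewrite mem_apfree => /andP[_ /perm_size ->]; rewrite size_iota. Qed.

Lemma apfree_gt0 n s x : s \in apfree n -> x \in s -> 0 < x.
Proof. by rewrite mem_apfree => /andP[_ /perm_mem->]; rewrite mem_iota => /andP[]. Qed.

Section Splicing.

Variables a b : nat.
Hypotheses (b_gt0 : 0 < b) (b_le_a : b <= a <= b.+1).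

Lemma splice_apfree p q : p \in apfree a -> q \in apfree b ->
  map to_odd p ++ map to_even q \in apfree (a + b) /\
  map to_even q ++ map to_odd p \in apfree (a + b).
Proof.
move=> pa qb; have p_pos : all (leq 1) p by apply/allP => x; apply: apfree_gt0 pa.
move: pa qb; rewrite !mem_apfree => /andP[p_free pP] /andP[q_free qP].
have oeP : perm_eq (map to_odd p ++ map to_even q) (iota 1 (a + b)).
  exact: perm_trans (perm_cat (perm_map _ pP) (perm_map _ qP))
                    (perm_iota_odd_even b_le_a).
have parity x y : x \in map to_odd p -> y \in map to_even q -> odd x != odd y.
  move=> /mapP[x' x'p ->] /mapP[y' _ ->].
  by rewrite odd_to_even odd_to_odd // (allP p_pos).
rewrite oeP perm_catC oeP !andbT; split; apply: has3AP_cat;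
  rewrite ?has3AP_to_odd ?has3AP_to_even // => x y xq yp.
by rewrite eq_sym parity.
Qed.

Lemma M_add : 2 * (M a * M b) <= M (a + b).
Proof.
pose oe := [seq map to_odd p ++ map to_even q | p <- apfree a, q <- apfree b].
pose eo := [seq map to_even q ++ map to_odd p | p <- apfree a, q <- apfree b].
have -> : 2 * (M a * M b) = size (oe ++ eo).
  by rewrite size_cat !size_allpairs mul2n addnn.
apply: uniq_leq_size => [|s]; last first.
  by rewrite mem_cat => /orP[] /allpairsP[[p q] [pa qb ->]];
    have [] := splice_apfree pa qb.
rewrite cat_uniq; apply/and3P; split.
- apply: allpairs_uniq; try exact: apfree_uniq.
  move=> [p1 q1] [p2 q2] /allpairsP[[? ?] [/= p1a _ [-> ->]]].
  move=> /allpairsP[[? ?] [/= p2a _ [-> ->]]] /=.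
  case/(cat_map_inj to_odd_inj to_even_inj) => [|-> -> //].
  by rewrite (apfree_size p1a) (apfree_size p2a).
- (* the words of oe start with an odd letter, those of eo with an even one *)
  have a_gt0 : 0 < a by lia.
  apply/hasPn => _ /allpairsP[[p q] [/= pa qb ->]].
  apply/allpairsP => -[[p' q'] [/= pa' qb' /(congr1 (fun s => odd (nth 0 s 0)))]].
  rewrite /= !nth_cat !size_map (apfree_size qb) (apfree_size pa') a_gt0 b_gt0.
  rewrite (nth_map 0) ?(apfree_size qb) // (nth_map 0) ?(apfree_size pa') //.
  rewrite odd_to_even odd_to_odd // (apfree_gt0 pa') // mem_nth //.
  by rewrite (apfree_size pa').
- apply: allpairs_uniq; try exact: apfree_uniq.
  move=> [p1 q1] [p2 q2] /allpairsP[[? ?] [/= _ q1b [-> ->]]].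
  move=> /allpairsP[[? ?] [/= _ q2b [-> ->]]] /=.
  case/(cat_map_inj to_even_inj to_odd_inj) => [|-> -> //].
  by rewrite (apfree_size q1b) (apfree_size q2b).
Qed.

End Splicing.

Fixpoint has3AP_head (x : nat) (t : seq nat) : bool :=
  if t is y :: t' then [&& y != x, x <= y.*2 & y.*2 - x \in t'] || has3AP_head x t'
  else false.

Fixpoint has3AP_fast (s : seq nat) : bool :=
  if s is x :: t then has3AP_head x t || has3AP_fast t else false.

Lemma has3AP_head_complete x t j k : j < k < size t -> nth 0 t j != x ->
  (nth 0 t j).*2 == x + nth 0 t k -> has3AP_head x t.
Proof.
elim: t j k => [|y t IH] j k; first by rewrite ltn0 andbF.
case: j k => [|j] [|k] //= jkt ne e.
  by rewrite ne (eqP e) leq_addr addKn mem_nth.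
by rewrite (IH j k) ?orbT.
Qed.

Lemma has3AP_fast_complete s : has3AP s -> has3AP_fast s.
Proof.
case/has3APP => i [j [k [ij jk ks ne e]]].
elim: s i j k ij jk ks ne e => [|x t IH] i j k ij jk ks; first by rewrite ltn0 in ks.
case: i j k ij jk ks => [|i] [|j] [|k] //= ij jk ks ne e.
  by rewrite ltnS in jk ks; rewrite (@has3AP_head_complete x t j k) ?jk // eq_sym.
by rewrite (IH i j k) ?orbT.
Qed.

Definition insert_at (x i : nat) (s : seq nat) := take i s ++ x :: drop i s.

Definition has3AP_max n s :=
  let pos := index^~ s in
  let pn := pos n in
  has (fun a => ~~ odd (n - a) &&
         (let pa := pos a in
          let pm := pos (a + n)./2 in
          (pa < pm < pn) || (pn < pm < pa)))
      (iota 1 n.-1).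

(* Inserting n into a progression-free arrangement of 1..n-1 can only create
   progressions having n as an end term, and [has3AP_max] looks for exactly
   those.  Soundness does not rely on this: [M_certificate] rechecks. *)
Fixpoint apfree_gen n :=
  if n is n'.+1 then
    [seq s <- [seq insert_at n i p | p <- apfree_gen n', i <- iota 0 n]
       | ~~ has3AP_max n s]
  else [:: [::]].

Fixpoint lex_lt (s t : seq nat) : bool :=
  match s, t with
  | [::], [::] => false
  | [::], _ => true
  | _ :: _, [::] => false
  | x :: s', y :: t' => (x < y) || (x == y) && lex_lt s' t'
  end.

Definition lex_le s t := lex_lt s t || (s == t).

Lemma lex_lt_irr : irreflexive lex_lt.
Proof. by elim=> [|x s IH] //=; rewrite ltnn eqxx IH. Qed.

Lemma lex_lt_trans : transitive lex_lt.
Proof.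
move=> t s; elim: s t => [|x s IH] [|y t] [|z u] //=.
case/orP=> [xy|/andP[/eqP <- st]] /orP[yz|/andP[/eqP <- tu]].
- by rewrite (ltn_trans xy yz).
- by rewrite xy.
- by rewrite yz.
- by rewrite eqxx (IH t u) ?orbT.
Qed.

Definition M_certificate n k :=
  let L := apfree_gen n in
  [&& k <= size L, sorted lex_lt (sort lex_le L) &
      all (fun s => ~~ has3AP_fast s && perm_eq s (iota 1 n)) L].

Lemma M_certificateP n k : M_certificate n k -> k <= M n.
Proof.
case/and3P=> kL sortedL /allP freeL; apply: leq_trans kL _.
have uniqL : uniq (apfree_gen n).
  by rewrite -(sort_uniq lex_le) (sorted_uniq lex_lt_trans lex_lt_irr).
apply: uniq_leq_size uniqL _ => s /freeL /andP[free perm].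
by rewrite mem_apfree perm andbT; apply: contra free; apply: has3AP_fast_complete.
Qed.

Lemma M7_ge : 104 <= M 7.
Proof. apply: M_certificateP; vm_cast_no_check (erefl true). Qed.

Lemma M8_ge : 282 <= M 8.
Proof. apply: M_certificateP; vm_cast_no_check (erefl true). Qed.

Lemma M9_ge : 496 <= M 9.
Proof. apply: M_certificateP; vm_cast_no_check (erefl true). Qed.

Lemma M10_ge : 1066 <= M 10.
Proof. apply: M_certificateP; vm_cast_no_check (erefl true). Qed.

Lemma M11_ge : 2460 <= M 11.
Proof. apply: M_certificateP; vm_cast_no_check (erefl true). Qed.

Lemma M12_ge : 6128 <= M 12.
Proof. apply: M_certificateP; vm_cast_no_check (erefl true). Qed.

Lemma M13_ge : 12840 <= M 13.
Proof. apply: M_certificateP; vm_cast_no_check (erefl true). Qed.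

Lemma M14_ge : 29380 <= M 14.
Proof. apply: M_certificateP; vm_cast_no_check (erefl true). Qed.

Lemma M15_ge : 58656 <= M 15.
Proof.
apply: leq_trans (M_add (a := 8) (b := 7) isT isT).
by rewrite -[58656]/(2 * (282 * 104)) leq_mul2l leq_mul ?M8_ge ?M7_ge.
Qed.

Local Open Scope R_scope.

Local Notation c := (Rpower 2132 (/ 10)).

Lemma c_pow10 : c ^ 10 = 2132.
Proof.
rewrite -Rpower_pow; last by apply: exp_pos.
by rewrite Rpower_mult INR_IZR_INZ /= Rinv_l ?Rpower_1; lra.
Qed.

Lemma pow_lt_compat x y k : 0 <= x < y -> x ^ k.+1 < y ^ k.+1.
Proof.
move=> xy; elim: k => [|k IH]; first by rewrite !pow_1; lra.
change (x * x ^ k.+1 < y * y ^ k.+1).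
by apply: Rmult_le_0_lt_compat; try apply: pow_le; lra.
Qed.

Lemma pow_le_inv x y k : 0 <= y -> x ^ k.+1 <= y ^ k.+1 -> x <= y.
Proof.
move=> y_ge0 xy; apply: Rnot_lt_le => yx.
by have := pow_lt_compat k (conj y_ge0 yx); lra.
Qed.

Lemma c_pow_le n (B : Z) : (0 <= B)%Z -> (2132 ^ Z.of_nat n <= B ^ 10)%Z -> c ^ n <= IZR B.
Proof.
move=> B_ge0 nB; apply: (pow_le_inv (k := 9)); first exact: IZR_le.
rewrite -pow_mult Nat.mul_comm pow_mult c_pow10 pow_IZR (pow_IZR B).
exact: IZR_le.
Qed.

Lemma c_pow_le_M_of n k : (k <= M n)%N ->
  (2132 ^ Z.of_nat n <= (2 * Z.of_nat k) ^ 10)%Z -> c ^ n <= 2 * INR (M n).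
Proof.
move=> kM nk; apply: Rle_trans (c_pow_le _ nk) _; first lia.
rewrite mult_IZR -INR_IZR_INZ; apply: Rmult_le_compat_l; first lra.
exact/le_INR/leP.
Qed.

Lemma c_pow_le_M_small n : (8 <= n <= 15)%N -> c ^ n <= 2 * INR (M n).
Proof.
move=> n_range; have [k -> k_le7] : exists2 k, n = (k + 8)%N & (k <= 7)%N.
  by exists (n - 8)%N; lia.
case: k k_le7 => [|[|[|[|[|[|[|[|]]]]]]]] // _; rewrite ?addSn add0n;
  [ apply: (c_pow_le_M_of M8_ge) | apply: (c_pow_le_M_of M9_ge)
  | apply: (c_pow_le_M_of M10_ge) | apply: (c_pow_le_M_of M11_ge)
  | apply: (c_pow_le_M_of M12_ge) | apply: (c_pow_le_M_of M13_ge)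
  | apply: (c_pow_le_M_of M14_ge) | apply: (c_pow_le_M_of M15_ge) ];
  by apply/Z.leb_le; vm_compute.
Qed.

Lemma pow_le_2M_add x a b : 0 <= x -> (0 < b)%N -> (b <= a <= b.+1)%N ->
  x ^ a <= 2 * INR (M a) -> x ^ b <= 2 * INR (M b) ->
  x ^ (a + b) <= 2 * INR (M (a + b)).
Proof.
move=> x_ge0 b_gt0 ba xa xb.
rewrite pow_add; apply: Rle_trans (Rmult_le_compat _ _ _ _ _ _ xa xb) _;
  try exact: pow_le.
apply: (Rle_trans _ (2 * INR (2 * (M a * M b)))).
  by apply: Req_le; rewrite !mult_INR [INR 2]/=; ring.
by apply: Rmult_le_compat_l; [lra | apply/le_INR/leP/M_add].
Qed.

Lemma c_pow_le_M n : (8 <= n)%N -> c ^ n <= 2 * INR (M n).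
Proof.
elim/ltn_ind: n => n IH n_ge8.
have [n_le15 | n_gt15] := leqP n 15; first by apply: c_pow_le_M_small; rewrite n_ge8.
have -> : n = (uphalf n + n./2)%N by lia.
by apply: pow_le_2M_add; try apply: IH; try lia; apply/Rlt_le/exp_pos.
Qed.

Theorem theorem1 (n : nat) (hn : (8 <= n)%coq_nat) :
  / 2 * (Rpower 2132 (/ 10)) ^ n <= INR (M n).
Proof. by have := c_pow_le_M (introT leP hn); lra. Qed.
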